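(* Assume the setup below. For every $\mathbf k\in\mathbb N^d$ with $|\mathbf k|>0$, $$\partial^{\mathbf k}H\Big|_{w=0}=\sum_{\substack{\mathbf i,\mathbf j\ne\mathbf 0\\ \mathbf i+\mathbf j=\mathbf k}}\ \sum_{\substack{\mathbf 0\ne\mathbf s\le\mathbf i\\ \mathbf 0\ne\mathbf t\le\mathbf j}}C(\mathbf i,\mathbf j)\,S^{\mathbf i}_{\mathbf s}S^{\mathbf j}_{\mathbf t}\,\mathbb E_x\big[A^{\mathbf s}(x)A^{\mathbf t}(x)\big],$$ where $C(\mathbf i,\mathbf j)=\prod\binom{i_u+j_u}{i_u}$, the product running over all $d$ coordinates $u$ of $\mathbb N^d$, and $\mathbb E_x$ is expectation with respect to $q$.
   Context: Fix integers $r\ge1$ and, for $1\le a\le r$, integers $n_a\ge1$ and $p_a\ge1$; put $d=\sum_{a=1}^r p_a$. An error syndrome is a tuple $\gamma=(\gamma_1,\dots,\gamma_r)$ of functions $\gamma_a:\{1,\dots,n_a\}\to\{0,1,\dots,p_a\}$. Its weight is $\mathrm{wt}(\gamma)=(s^a_b)_{1\le a\le r,\,1\le b\le p_a}\in\mathbb N^d$ with $s^a_b=|\gamma_a^{-1}(b)|$. Multi-indices $\mathbf k=(k^a_b)\in\mathbb N^d$ are indexed the same way; write $\mathbf k^a=(k^a_1,\dots,k^a_{p_a})$, $|\mathbf k^a|=\sum_b k^a_b$, $|\mathbf k|=\sum_a|\mathbf k^a|$, and $\mathbf s\le\mathbf k$ means $s^a_b\le k^a_b$ for all $a,b$. Given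 a finite set $\mathcal Q$ and a function $\pi:\prod_{a=1}^r\{0,\dots,p_a\}^{n_a}\to\mathcal Q$, set $\mathrm{eval}(\pi,\gamma)=\pi(\gamma_1(1),\dots,\gamma_1(n_1),\dots,\gamma_r(1),\dots,\gamma_r(n_r))$ and, for $\tau\in\mathcal Q$, define the polynomial in variables $x^a_b$ ($1\le a\le r$, $0\le b\le p_a$) $$f^\tau_\pi=\sum_\gamma \delta_{\tau=\mathrm{eval}(\pi,\gamma)}\prod_{a=1}^r\prod_{c=1}^{n_a}x^a_{\gamma_a(c)}$$ (sum over all error syndromes). We regard it as a polynomial in $w=(w^a_b)_{1\le a\le r,\,1\le b\le p_a}$ via the substitution $x^a_0=1-\sum_{b=1}^{p_a}w^a_b$, $x^a_b=w^a_b$ for $b\ge1$; the point $w=0$ corresponds to all $x^a_0=1$ and all other $x^a_b=0$. Write $\partial^{\mathbf k}=\prod_{a,b}(\partial/\partial w^a_b)^{k^a_b}$. For $\mathbf s\le\mathbf k$, $$S^{\mathbf k}_{\mathbf s}=\prod_{a=1}^r\Big\{\delta_{n_a\ge|\mathbf k^a|}(-1)^{|\mathbf k^a|-|\mathbf s^a|}\frac{(n_a-|\mathbf s^a|)!}{(n_a-|\mathbf k^a|)!}\prod_{b=1}^{p_a}\frac{k^a_b!}{(k^a_b-s^a_b)!}\Big\},$$ interpreted as $0$ when some $n_a<|\mathbf k^a|$. Further let $I$ be a finite set, $q$ a probability distribution on $I$, $y:I\to\mathcal Q$ a function, and for each $x\in I$ let $\pi_x:\prod_a\{0,\dots,p_a\}^{n_a}\to\mathcal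 Q$ be a function with $\pi_x(0,\dots,0)=y(x)$. Put $g(x,w)=\sum_{\tau\ne y(x)}f^\tau_{\pi_x}(w)$, $H(w)=\sum_{x\in I}q(x)g(x,w)^2$, and $A^{\mathbf s}(x)=|\{\gamma:\mathrm{wt}(\gamma)=\mathbf s,\ \mathrm{eval}(\pi_x,\gamma)\ne y(x)\}|$. (In the paper, $\pi_x$ encodes the computation paths of a universal Turing machine simulating a fixed machine $M$ for $t$ steps on input $x$, $g(x,w)$ is the probability of an output error for the noisy code $w$ near the code of $M$, and $A^{\mathbf s}(x)$ counts weight-$\mathbf s$ error syndromes producing an output error.) *)

From HB Require Import structures.
From mathcomp Require Import all_boot all_order all_algebra.
From mathcomp Require Import mpoly.
Set Implicit Arguments. Unset Strict Implicit. Unset Printing Implicit Defensive.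
Import Order.TTheory GRing.Theory Num.Theory.
Local Open Scope ring_scope.

Section NoisyDefs.
Variables (r : nat) (n p : 'I_r -> nat).

(* index set of the variables w^a_b, 1 <= a <= r, 1 <= b <= p_a;
   the element (a, b') with b' : 'I_(p a) stands for b = b' + 1 *)
Definition idx := {a : 'I_r & 'I_(p a)}.
(* d = number of variables (= \sum_a p_a) *)
Definition nvars : nat := #|{: idx}|.
Definition var (a : 'I_r) (b : 'I_(p a)) : 'I_nvars :=
  enum_rank (Tagged (fun a => 'I_(p a)) b).

Definition coord (k : 'X_{1..nvars}) (a : 'I_r) (b : 'I_(p a)) : nat := k (var b).
Definition blockdeg (k : 'X_{1..nvars}) (a : 'I_r) : nat := (\sum_(b < p a) coord k b)%N.

Definition syndrome := {dffun forall a : 'I_r, {ffun 'I_(n a) -> 'I_(p a).+1}}.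
Definition zero_syn : syndrome :=
  finfun (fun a : 'I_r => [ffun c : 'I_(n a) => (ord0 : 'I_(p a).+1)]).

(* weight: s^a_b = |gamma_a^{-1}(b)| *)
Definition wt (g : syndrome) : 'X_{1..nvars} :=
  [multinom #|[set c | val (g (tag (enum_val i)) c) == (tagged (enum_val i)).+1]|
    | i < nvars].

Variable R : fieldType.

(* x^a_b after the substitution x^a_0 = 1 - \sum_b w^a_b, x^a_b = w^a_b *)
Definition xvar (a : 'I_r) (b : 'I_(p a).+1) : {mpoly R[nvars]} :=
  match unlift (ord0 : 'I_(p a).+1) b with
  | Some b' => 'X_(var b')
  | None => 1 - \sum_(b' < p a) 'X_(var b')
  end.

Variable Q : finType.

Definition fpoly (tau : Q) (pi : syndrome -> Q) : {mpoly R[nvars]} :=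
  \sum_(g : syndrome)
     (tau == pi g)%:R * \prod_(a < r) \prod_(c < n a) xvar (g a c).

Definition gpoly (pi : syndrome -> Q) (yx : Q) : {mpoly R[nvars]} :=
  \sum_(tau | tau != yx) fpoly tau pi.

Definition Hpoly (I : finType) (q : I -> R) (y : I -> Q) (pi : I -> syndrome -> Q)
  : {mpoly R[nvars]} :=
  \sum_(x : I) q x *: (gpoly (pi x) (y x)) ^+ 2.

Definition Scoef (k s : 'X_{1..nvars}) : R :=
  \prod_(a < r)
    (if (blockdeg k a <= n a)%N then
       (-1) ^+ (blockdeg k a - blockdeg s a)
       * ((n a - blockdeg s a)`!)%:R / ((n a - blockdeg k a)`!)%:R
       * \prod_(b < p a) (((coord k b)`!)%:R / ((coord k b - coord s b)`!)%:R)
     else 0).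

Definition Acount (pi : syndrome -> Q) (yx : Q) (s : 'X_{1..nvars}) : nat :=
  #|[set g : syndrome | (wt g == s) && (pi g != yx)]|.

End NoisyDefs.

Definition Cbin (m : nat) (i j : 'X_{1..m}) : nat := (\prod_(u < m) 'C(i u + j u, i u))%N.

From Pilot Require Import Defs.
From HB Require Import structures.
From mathcomp Require Import all_boot all_order all_algebra.
From mathcomp Require Import mpoly.
From mathcomp Require Import ring.
Import Order.TTheory GRing.Theory Num.Theory.
Local Open Scope ring_scope.
Set Implicit Arguments. Unset Strict Implicit. Unset Printing Implicit Defensive.

(** Since the derivative at 0 is [k! * f@_k], everything is about coefficients.
    A syndrome [g] contributes the monomial
    [\prod_a (1 - \sum_b w^a_b) ^+ z_a * 'X_[wt g]], where [z_a] counts the zeros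
    of [g_a]; differentiating the powers of the affine factors produces signed
    falling factorials, and [i! * (.)@_i] of this monomial is exactly
    [S^i_(wt g)] when [wt g <= i] (and 0 otherwise).  Summing over the syndromes
    producing an error gives [i! * (g x)@_i = \sum_(0 != s <= i) S^i_s A^s(x)];
    the weight 0 is absent because only the zero syndrome has weight 0, and it
    produces no error.  Finally [k! * (f ^+ 2)@_k] is the sum over [i + j = k]
    of [C(i, j) * (i! f@_i) * (j! f@_j)], whose terms with [i = 0] or [j = 0]
    vanish, and averaging over [x] gives the formula. *)

Section Multinomials.
Variables (m : nat) (R : comNzRingType).

Definition mfact (e : 'X_{1..m}) : nat := \prod_(u < m) (e u)`!.

Lemma mnm_neq0_coord (e : 'X_{1..m}) : e != 0%MM -> exists u, e u != 0%N.
Proof.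
move=> nz; apply/existsP; apply: contraR nz => /existsPn h.
by apply/eqP/mnmP => u; rewrite mnm0E; apply/eqP; exact: negbNE (h u).
Qed.

Lemma lem0 (e : 'X_{1..m}) : (e <= 0)%MM -> e = 0%MM.
Proof. by move=> h; apply/mnmP => u; have := mnm_lepP h u; rewrite !mnm0E leqn0 => /eqP. Qed.

Lemma mfactD (i j : 'X_{1..m}) : mfact (i + j) = (Cbin i j * mfact i * mfact j)%N.
Proof.
rewrite /Cbin /mfact -!big_split /=; apply: eq_bigr => u _.
by rewrite mnmDE -(bin_fact (leq_addr (j u) (i u))) addKn mulnA.
Qed.

Lemma meval0_mcoeff0 (f : {mpoly R[m]}) : f.@[fun _ => 0] = f@_0.
Proof.
rewrite [in LHS](mpolyE f) [in RHS](mpolyE f) !raddf_sum /=.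
apply: eq_bigr => e _; rewrite mevalZ mevalX mcoeffZ mcoeffX; congr (_ * _).
have [->|nz] := eqVneq e 0%MM.
  by rewrite big1 // => u _; rewrite mnm0E expr0.
have [u hu] := mnm_neq0_coord nz.
by rewrite (bigD1 u) //= expr0n (negbTE hu) mul0r.
Qed.

Lemma subm_eqxx (e : 'X_{1..m}) : (e - e = 0)%MM.
Proof. by apply/mnmP => u; rewrite mnmBE subnn mnm0E. Qed.

Lemma meval0_mderivm (k : 'X_{1..m}) (f : {mpoly R[m]}) :
  (mderivm k f).@[fun _ => 0] = (mfact k)%:R * f@_k.
Proof.
rewrite meval0_mcoeff0 [in LHS](mpolyE f) [in RHS](mpolyE f) !raddf_sum /=.
rewrite mulr_sumr; apply: eq_bigr => e _.
rewrite mderivmZ mderivmX !mcoeffZ !mcoeffX [RHS]mulrCA; congr (_ * _).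
have [->|nek] := eqVneq e k.
  rewrite subm_eqxx eqxx !mulr1; congr _%:R.
  by apply: eq_bigr => u _; rewrite ffactnn.
rewrite mulr0; have [ek0|] := eqVneq (e - k)%MM 0%MM; last by rewrite mulr0.
have lek u : (e u <= k u)%N.
  by move/mnmP: ek0 => /(_ u); rewrite mnmBE mnm0E => /eqP; rewrite subn_eq0.
have [u hu] : exists u, e u != k u.
  apply/existsP; apply: contraR nek => /existsPn h.
  by apply/eqP/mnmP => u; apply/eqP; exact: negbNE (h u).
have ltu : (e u < k u)%N by rewrite ltn_neqAle hu lek.
by rewrite (bigD1 u) //= ffact_small // mul0n mul0r.
Qed.

Lemma mfact_mcoeff_sqr (f : {mpoly R[m]}) (k : 'X_{1..m}) :
  (mfact k)%:R * (f ^+ 2)@_k =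
  \sum_(i : 'X_{1..m < (mdeg k).+1})
    \sum_(j : 'X_{1..m < (mdeg k).+1} | (bmnm i + bmnm j == k)%MM)
      (Cbin i j)%:R * ((mfact i)%:R * f@_i) * ((mfact j)%:R * f@_j).
Proof.
rewrite expr2 mcoeffM mulr_sumr.
rewrite (pair_big_dep xpredT (fun i j => (bmnm i + bmnm j == k)%MM)) /=.
apply: eq_big => [ij|ij]; first by rewrite eq_sym.
by move=> /eqP hk; rewrite [in mfact k]hk mfactD !natrM; ring.
Qed.

End Multinomials.

Section VariableIndexing.
Variables (r : nat) (p : 'I_r -> nat).
Local Notation N := (nvars p).

Lemma var_Tagged (t : idx p) : var (tagged t) = enum_rank t.
Proof. by case: t. Qed.

Lemma big_var (T : Type) (idx0 : T) (op : Monoid.com_law idx0) (F : 'I_N -> T) :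
  \big[op/idx0]_(u : 'I_N) F u = \big[op/idx0]_(a < r) \big[op/idx0]_(b < p a) F (var b).
Proof.
rewrite (sig_big_dep xpredT (fun _ => xpredT) (fun a b => F (var b))) /=.
rewrite (reindex (@enum_rank (idx p))) /=; last first.
  by exists enum_val => x _; [rewrite enum_rankK | rewrite enum_valK].
by apply: eq_bigr => t _; rewrite var_Tagged.
Qed.

Lemma eq_Tagged a (b b' : 'I_(p a)) :
  (Tagged (fun a => 'I_(p a)) b == Tagged (fun a => 'I_(p a)) b') = (b == b').
Proof. by rewrite -tag_eqE /tag_eq /= eqxx /= tagged_asE. Qed.

Lemma sum_var_eq a (u : 'I_N) : (\sum_(b < p a) (var b == u))%N = (a == tag (enum_val u)).
Proof.
rewrite -[u]enum_valK enum_rankK; set t := enum_val u.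
transitivity (\sum_(b < p a) (Tagged (fun a => 'I_(p a)) b == t))%N.
  apply: eq_bigr => b _; rewrite /var; congr nat_of_bool.
  by apply/eqP/eqP => [/enum_rank_inj|->].
case: t => a' b' /=; move: b'.
have [<-|neq] := eqVneq a a' => b'.
  rewrite (bigD1 b') //= eq_Tagged eqxx big1 // => b /negbTE.
  by rewrite eq_Tagged => ->.
by rewrite big1 // => b _; rewrite -tag_eqE /tag_eq /= (negbTE neq).
Qed.

Lemma blockdeg0 a : blockdeg (0%MM : 'X_{1..N}) a = 0%N.
Proof. by rewrite /blockdeg big1 // => b _; rewrite /Defs.coord mnm0E. Qed.

Lemma blockdegD (e1 e2 : 'X_{1..N}) a :
  blockdeg (e1 + e2)%MM a = (blockdeg e1 a + blockdeg e2 a)%N.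
Proof. by rewrite /blockdeg -big_split; apply: eq_bigr => b _; rewrite /Defs.coord mnmDE. Qed.

Lemma blockdegU (u : 'I_N) a : blockdeg (U_(u))%MM a = (a == tag (enum_val u)).
Proof. by rewrite /blockdeg -sum_var_eq; apply: eq_bigr => b _; rewrite /Defs.coord mnm1E eq_sym. Qed.

End VariableIndexing.

Section AffineFactors.
Variables (r : nat) (p : 'I_r -> nat) (R : comNzRingType).
Local Notation N := (nvars p).

Definition xzero (a : 'I_r) : {mpoly R[N]} := 1 - \sum_(b < p a) 'X_(var b).
Definition xzero_pow (z : 'I_r -> nat) : {mpoly R[N]} := \prod_(a < r) xzero a ^+ z a.

Lemma mderivXU (u v : 'I_N) : mderiv u ('X_v : {mpoly R[N]}) = (v == u)%:R.
Proof.
rewrite mderivX mnm1E; have [->|_] := eqVneq v u; last by rewrite scale0r.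
by rewrite subm_eqxx mpolyX0 scale1r.
Qed.

Lemma mderiv1 (u : 'I_N) : mderiv u (1 : {mpoly R[N]}) = 0.
Proof. by rewrite -mpolyC1 mderivC. Qed.

Lemma mderiv_xzero a (u : 'I_N) : mderiv u (xzero a) = - (a == tag (enum_val u))%:R.
Proof.
rewrite /xzero mderivB mderiv1 sub0r.
rewrite (big_morph (mderiv u) (@mderivD _ _ u) (@mderiv0 _ _ u)) -(sum_var_eq a u) natr_sum.
by congr (- _); apply: eq_bigr => b _; exact: mderivXU.
Qed.

Lemma mderivXn (u : 'I_N) (f : {mpoly R[N]}) k :
  mderiv u (f ^+ k.+1) = k.+1%:R * f ^+ k * mderiv u f.
Proof.
elim: k => [|k IH]; first by rewrite expr1 expr0 mulr1 mul1r.
by rewrite exprS mderivM IH [f ^+ k.+1]exprS -[k.+2%:R]natr1 -[k.+1%:R]natr1; ring.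
Qed.

Lemma mderiv_prod_eq0 (u : 'I_N) (P : pred 'I_r) (F : 'I_r -> {mpoly R[N]}) :
  (forall a, P a -> mderiv u (F a) = 0) -> mderiv u (\prod_(a | P a) F a) = 0.
Proof.
move=> h; apply: (big_ind (fun x => mderiv u x = 0)) => //; first exact: mderiv1.
by move=> x y hx hy; rewrite mderivM hx hy mul0r mulr0 addr0.
Qed.

Lemma mderiv_xzero_pow (u : 'I_N) z :
  mderiv u (xzero_pow z) =
  - (z (tag (enum_val u)))%:R *: xzero_pow (fun a => z a - (a == tag (enum_val u)))%N.
Proof.
set a0 := tag (enum_val u).
rewrite /xzero_pow (bigD1 a0) //= mderivM mderiv_prod_eq0; last first.
  move=> a ha; case: (z a) => [|k]; first by rewrite expr0 mderiv1.
  by rewrite mderivXn mderiv_xzero (negbTE ha) oppr0 mulr0.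
rewrite mulr0 addr0 [in RHS](bigD1 a0) //= eqxx.
have -> : \prod_(a < r | a != a0) xzero a ^+ (z a - (a == a0)) =
          \prod_(a < r | a != a0) xzero a ^+ z a.
  by apply: eq_bigr => a /negbTE ->; rewrite subn0.
case: (z a0) => [|k]; first by rewrite expr0 mderiv1 mul0r scaleNr scale0r oppr0.
by rewrite mderivXn mderiv_xzero eqxx subn1 /= scaleNr scaler_nat; ring.
Qed.

Lemma mderivm_xzero_pow (e : 'X_{1..N}) z :
  mderivm e (xzero_pow z) =
  (\prod_(a < r) ((-1) ^+ blockdeg e a * (z a ^_ blockdeg e a)%:R)) *:
     xzero_pow (fun a => z a - blockdeg e a)%N.
Proof.
have [d] := ubnP (mdeg e); elim: d e z => // d IH e z; rewrite ltnS => hd.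
have [->|nz] := eqVneq e 0%MM.
  rewrite mderivm0m big1 ?scale1r => [|a _]; last by rewrite blockdeg0 expr0 ffactn0 mul1r.
  by apply: eq_bigr => a _; rewrite blockdeg0 subn0.
have [u hu] := mnm_neq0_coord nz.
set e' := (e - U_(u))%MM.
have ee : e = (U_(u) + e')%MM.
  rewrite addmC submK //; apply/mnm_lepP => i; rewrite mnm1E.
  by case: eqP => [<-|]; rewrite ?lt0n.
have hd' : (mdeg e' < d)%N by move: hd; rewrite ee mdegD mdeg1 add1n.
rewrite ee mderivmDm mderivmU1m mderiv_xzero_pow mderivmZ IH // scalerA.
set a0 := tag (enum_val u); congr (_ *: _).
  rewrite (bigD1 a0) //= [RHS](bigD1 a0) //= mulrA; congr (_ * _).
    rewrite blockdegD blockdegU eqxx add1n subn1 exprS ffactnS.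
    by rewrite natrM mulN1r !mulNr mulrCA.
  by apply: eq_bigr => a /negbTE ha; rewrite blockdegD blockdegU ha subn0.
by apply: eq_bigr => a _; rewrite blockdegD blockdegU subnDA.
Qed.

Lemma meval0_xzero_pow z : (xzero_pow z).@[fun _ => 0] = 1.
Proof.
rewrite /xzero_pow rmorph_prod big1 // => a _.
rewrite rmorphXn /xzero rmorphB rmorph1 rmorph_sum big1 ?subr0 ?expr1n // => b _.
exact: mevalXU.
Qed.

Lemma mfact_mcoeff_xzero_pow (e : 'X_{1..N}) z :
  (mfact e)%:R * (xzero_pow z)@_e =
  \prod_(a < r) ((-1) ^+ blockdeg e a * (z a ^_ blockdeg e a)%:R).
Proof. by rewrite -meval0_mderivm mderivm_xzero_pow mevalZ meval0_xzero_pow mulr1. Qed.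

End AffineFactors.

Section Fibers.
Variables (T : finType) (k : nat) (g : 'I_k -> T).

Lemma prod_fiber (M : comNzRingType) (f : T -> M) :
  \prod_(c < k) f (g c) = \prod_(t : T) f t ^+ #|[set c | g c == t]|.
Proof.
rewrite (partition_big g xpredT) //=; apply: eq_bigr => t _.
rewrite (eq_bigr (fun _ => f t)) => [|c /eqP -> //].
by rewrite -prodr_const; apply: eq_bigl => c; rewrite inE.
Qed.

Lemma sum_fiber : (\sum_(t : T) #|[set c | g c == t]|)%N = k.
Proof.
rewrite -[k in RHS]card_ord -sum1_card (partition_big g xpredT) //=.
by apply: eq_bigr => t _; rewrite -sum1_card; apply: eq_bigl => c; rewrite inE.
Qed.

End Fibers.

Section Syndromes.
Variables (r : nat) (n p : 'I_r -> nat) (R : fieldType).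
Local Notation N := (nvars p).

Definition synmono (g : syndrome n p) : {mpoly R[N]} :=
  \prod_(a < r) \prod_(c < n a) xvar R (g a c).

Definition nzeros (g : syndrome n p) (a : 'I_r) : nat := #|[set c | g a c == ord0]|.

Lemma xvar0 a : xvar R (ord0 : 'I_(p a).+1) = xzero p R a.
Proof. by rewrite /xvar unlift_none. Qed.

Lemma xvar_lift a (b : 'I_(p a)) : xvar R (lift ord0 b) = 'X_(var b).
Proof. by rewrite /xvar liftK. Qed.

Lemma wt_var (g : syndrome n p) a (b : 'I_(p a)) :
  wt g (var b) = #|[set c | g a c == lift ord0 b]|.
Proof.
rewrite /wt mnmE /var enum_rankK /=; apply: eq_card => c.
by rewrite !inE [in RHS]eqE.
Qed.

Lemma wt_eq0 (g : syndrome n p) : wt g = 0%MM -> g = zero_syn n p.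
Proof.
move=> h; apply/ffunP => a; apply/ffunP => c; rewrite /zero_syn !ffunE.
case: (unliftP ord0 (g a c)) => [b e|//].
have : wt g (var b) = 0%N by rewrite h mnm0E.
by rewrite wt_var => /eqP; rewrite cards_eq0 => /eqP/setP/(_ c); rewrite !inE e eqxx.
Qed.

Lemma nzeros_blockdeg (g : syndrome n p) a : (nzeros g a + blockdeg (wt g) a)%N = n a.
Proof.
rewrite -[in RHS](sum_fiber (g a)) big_ord_recl /nzeros; congr (_ + _)%N.
by apply: eq_bigr => b _; rewrite /Defs.coord wt_var.
Qed.

Lemma synmonoE (g : syndrome n p) : synmono g = xzero_pow p R (nzeros g) * 'X_[wt g].
Proof.
rewrite /synmono mpolyXE_id big_var /xzero_pow -big_split /=; apply: eq_bigr => a _.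
rewrite prod_fiber big_ord_recl xvar0; congr (_ * _).
by apply: eq_bigr => b _; rewrite xvar_lift wt_var.
Qed.

Lemma gpolyE (Q : finType) (pi : syndrome n p -> Q) y :
  gpoly R pi y = \sum_(g : syndrome n p) (pi g != y)%:R * synmono g.
Proof.
rewrite /gpoly /fpoly exchange_big /=; apply: eq_bigr => g _.
rewrite -mulr_suml; congr (_ * _).
have [e|ne] := eqVneq (pi g) y.
  by rewrite big1 // => t ht; rewrite e (negbTE ht).
by rewrite (bigD1 (pi g)) //= eqxx big1 ?addr0 // => t /andP [_ /negbTE ->].
Qed.

End Syndromes.

Section Coefficients.
Variables (r : nat) (n p : 'I_r -> nat) (R : numFieldType).
Local Notation N := (nvars p).

Lemma natr_fact_neq0 k : k`!%:R != 0 :> R.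
Proof. by rewrite pnatr_eq0 -lt0n fact_gt0. Qed.

Lemma natr_ffact (m d : nat) : (d <= m)%N -> (m ^_ d)%:R = m`!%:R / (m - d)`!%:R :> R.
Proof. by move=> /ffact_fact <-; rewrite natrM mulfK ?natr_fact_neq0. Qed.

Lemma mcoeffMX_nlem (f : {mpoly R[N]}) (s i : 'X_{1..N}) :
  ~~ (s <= i)%MM -> (f * 'X_[s])@_i = 0.
Proof.
move=> hs; rewrite mcoeffM big1 // => ij /eqP hi; rewrite mcoeffX.
case: eqP => [e|]; last by rewrite mulr0.
by move/negP: hs; case; rewrite hi e lem_addl.
Qed.

Lemma mfact_mcoeff_synmono (g : syndrome n p) (i : 'X_{1..N}) :
  (mfact i)%:R * (synmono R g)@_i = if (wt g <= i)%MM then Scoef n R i (wt g) else 0.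
Proof.
rewrite synmonoE; case: ifP => hs; last by rewrite mcoeffMX_nlem ?hs // mulr0.
set s := wt g; set e := (i - s)%MM.
have ie : i = (s + e)%MM by rewrite addmC submK.
have -> : (xzero_pow p R (nzeros g) * 'X_[s])@_i = (xzero_pow p R (nzeros g))@_e.
  by rewrite ie mcoeffMX.
have -> : (mfact i)%:R = (\prod_(u < N) ((i u)`!%:R / (e u)`!%:R)) * (mfact e)%:R :> R.
  by rewrite /mfact !natr_prod -big_split /=; apply: eq_bigr => u _; rewrite divfK ?natr_fact_neq0.
rewrite -mulrA mfact_mcoeff_xzero_pow big_var /Scoef -big_split /=.
apply: eq_bigr => a _.
have bd_e : blockdeg e a = (blockdeg i a - blockdeg s a)%N by rewrite ie blockdegD addKn.
have z_a : nzeros g a = (n a - blockdeg s a)%N by rewrite -(nzeros_blockdeg g a) addnK.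
have le_si : (blockdeg s a <= blockdeg i a)%N by rewrite ie blockdegD leq_addr.
have le_sn : (blockdeg s a <= n a)%N by rewrite -(nzeros_blockdeg g a) leq_addl.
have -> : \prod_(b < p a) ((i (var b))`!%:R / (e (var b))`!%:R) =
          \prod_(b < p a) ((Defs.coord i b)`!%:R / (Defs.coord i b - Defs.coord s b)`!%:R :> R).
  by apply: eq_bigr => b _; rewrite /e mnmBE.
rewrite bd_e z_a.
case: ifP => le_in.
  rewrite natr_ffact ?leq_sub2r // subnBA // subnK // [RHS]mulrC.
  by rewrite !mulrA.
by rewrite ffact_small ?mulr0 // ltn_sub2rE // ltnNge le_in.
Qed.

Lemma mfact_mcoeff_gpoly (Q : finType) (pi : syndrome n p -> Q) y
    (hy : pi (zero_syn n p) = y) (b : nat) (i : 'X_{1..N < b}) :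
  (mfact i)%:R * (gpoly R pi y)@_i =
  \sum_(s : 'X_{1..N < b} | lem s i && (bmnm s != 0%MM)) Scoef n R i s * (Acount pi y s)%:R.
Proof.
rewrite gpolyE raddf_sum mulr_sumr /=.
under [RHS]eq_bigr => s _ do rewrite /Acount -sum1_card natr_sum big_mkcond mulr_sumr /=.
rewrite exchange_big /=; apply: eq_bigr => g _.
have [e|ne] := eqVneq (pi g) y.
  by rewrite mul0r mcoeff0 mulr0 big1 // => s _; rewrite inE e eqxx andbF mulr0.
have wn : wt g != 0%MM by apply: contra ne => /eqP /wt_eq0 ->; rewrite hy.
rewrite mul1r mfact_mcoeff_synmono; case: ifP => hs; last first.
  rewrite big1 // => s /andP [hsi _]; rewrite inE ne andbT.
  by case: eqP => [e|]; [move: hs; rewrite e hsi | rewrite mulr0].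
have hb : (mdeg (wt g) < b)%N by apply: leq_ltn_trans (lemc_mdeg (lem_leo hs)) (bmdeg i).
rewrite (bigD1 (BMultinom hb)) /=; last by rewrite hs wn.
rewrite inE eqxx ne mulr1 big1 ?addr0 // => s /andP [_ hne].
rewrite inE ne andbT; case: eqP => [e|]; last by rewrite mulr0.
by move/negP: hne; case; apply/eqP/val_inj; rewrite /= e.
Qed.

End Coefficients.

Lemma sum_mean_mul_sums (R : comNzRingType) (I S : finType) (P1 P2 : pred S) (c : R)
    (q : I -> R) (a1 a2 : S -> R) (A : I -> S -> nat) :
  \sum_(s | P1 s) \sum_(t | P2 t) c * a1 s * a2 t * \sum_(x : I) q x * (A x s * A x t)%:R =
  \sum_(x : I) q x *
    (c * (\sum_(s | P1 s) a1 s * (A x s)%:R) * (\sum_(t | P2 t) a2 t * (A x t)%:R)).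
Proof.
under eq_bigr => s _ do (under eq_bigr => t _ do rewrite mulr_sumr; rewrite exchange_big /=).
rewrite exchange_big /=; apply: eq_bigr => x _.
rewrite -mulrA big_distrlr /= !mulr_sumr; apply: eq_bigr => s _.
by rewrite !mulr_sumr; apply: eq_bigr => t _; rewrite natrM; ring.
Qed.

Unset Implicit Arguments. Set Strict Implicit.

Theorem mainTheorem7 (R : realFieldType) (r : nat) (n p : 'I_r -> nat)
  (hn : forall a, (0 < n a)%N) (hp : forall a, (0 < p a)%N)
  (Q I : finType) (q : I -> R) (hq0 : forall x, 0 <= q x) (hq1 : \sum_(x : I) q x = 1)
  (y : I -> Q) (pi : I -> syndrome n p -> Q)
  (hpi : forall x, pi x (zero_syn n p) = y x)
  (k : 'X_{1..nvars p}) (hk : (0 < mdeg k)%N) :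
  (mderivm k (Hpoly q y pi)).@[fun _ => 0] =
  \sum_(i : 'X_{1..(nvars p) < (mdeg k).+1})
   \sum_(j : 'X_{1..(nvars p) < (mdeg k).+1}
          | [&& (bmnm i + bmnm j == k)%MM, bmnm i != 0%MM & bmnm j != 0%MM])
    \sum_(s : 'X_{1..(nvars p) < (mdeg k).+1} | lem s i && (bmnm s != 0%MM))
     \sum_(t : 'X_{1..(nvars p) < (mdeg k).+1} | lem t j && (bmnm t != 0%MM))
       (Cbin (bmnm i) (bmnm j))%:R * Scoef n R (bmnm i) (bmnm s) * Scoef n R (bmnm j) (bmnm t)
       * \sum_(x : I) q x * (Acount (pi x) (y x) s * Acount (pi x) (y x) t)%:R.
Proof.
set N := nvars p.
set B := (mdeg k).+1.
pose G x (i : 'X_{1..N < B}) : R :=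
  \sum_(s : 'X_{1..N < B} | lem s i && (bmnm s != 0%MM))
    Scoef n R i s * (Acount (pi x) (y x) s)%:R.
have G0 x (i : 'X_{1..N < B}) : bmnm i = 0%MM -> G x i = 0.
  by move=> i0; apply: big1 => s; rewrite i0 => /andP [/lem0 ->]; rewrite eqxx.
transitivity (\sum_(x : I) q x * \sum_(i : 'X_{1..N < B})
    \sum_(j : 'X_{1..N < B} | (bmnm i + bmnm j == k)%MM)
      (Cbin i j)%:R * G x i * G x j).
  rewrite meval0_mderivm /Hpoly raddf_sum mulr_sumr; apply: eq_bigr => x _.
  rewrite /= mcoeffZ mulrCA mfact_mcoeff_sqr; congr (_ * _).
  by apply: eq_bigr => i _; apply: eq_bigr => j _; rewrite !mfact_mcoeff_gpoly.
under eq_bigr => x _ do rewrite mulr_sumr.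
rewrite exchange_big /=; apply: eq_bigr => i _.
under eq_bigr => x _ do rewrite mulr_sumr.
rewrite exchange_big /= [RHS]big_mkcond [LHS]big_mkcond; apply: eq_bigr => j _.
case: ifP => hij; rewrite /= ?hij //.
have [i0|_] := eqVneq (bmnm i) 0%MM.
  by rewrite big1 // => x _; rewrite G0 // mulr0 mul0r mulr0.
have [j0|_] := eqVneq (bmnm j) 0%MM.
  by rewrite big1 // => x _; rewrite (G0 x j) // !mulr0.
by rewrite sum_mean_mul_sums.
Qed.
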